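(* For every $n\ge1$: $F^{\mathrm{(per)}}_{2n}(-1)=0$ if $n$ is even, and $F^{\mathrm{(per)}}_{2n}(-1)=-\dfrac{\mathrm{AV}_n^2}{\mathrm{A}_n}$ if $n$ is odd.
   Context: $F^{\mathrm{(per)}}_{2n}(x) = \sum_{k=1}^n \binom{n+k-2}{k-1}\frac{(2n-1)!\,(2n-k-1)! }{(3 n-2)!\,(n-k)!}x^k$ (boundary loop generating function of the periodic Temperley–Lieb loop model at loop weight 1, size $2n$). $\mathrm{A}_n=\prod_{j=0}^{n-1}\frac{(3j+1)!}{(n+j)!}$ (number of $n\times n$ alternating sign matrices), and for $m\ge0$, $\mathrm{AV}_{2m+1}=\prod_{j=0}^{m-1}(3j+2)\frac{(6j+3)!\,(2j+1)!}{(4j+3)!\,(4j+2)!}$ (number of vertically symmetric alternating sign matrices of size $2m+1$). *)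

From HB Require Import structures.
From mathcomp Require Import all_boot all_order all_algebra.
Set Implicit Arguments. Unset Strict Implicit. Unset Printing Implicit Defensive.
Import Order.TTheory GRing.Theory Num.Theory.
Local Open Scope ring_scope.

Definition Fper (n : nat) (x : rat) : rat :=
  \sum_(1 <= k < n.+1)
    ('C(n + k - 2, k - 1))%:R
    * (((2 * n - 1)`! * (2 * n - k - 1)`!)%:R
       / (((3 * n - 2)`! * (n - k)`!)%:R))
    * x ^+ k.

Definition ASM (n : nat) : rat :=
  \prod_(j < n) (((3 * j + 1)`!)%:R / ((n + j)`!)%:R).

Definition AVodd (m : nat) : rat :=
  \prod_(j < m) ((3 * j + 2)%:R
     * (((6 * j + 3)`! * (2 * j + 1)`!)%:R
        / (((4 * j + 3)`! * (4 * j + 2)`!)%:R))).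

(* AV_n for n odd, n = 2m+1 (only meaningful for odd n) *)
Definition AV (n : nat) : rat := AVodd n./2.

From HB Require Import structures.
From mathcomp Require Import all_boot all_order all_algebra.
From mathcomp Require Import ring lra zify.
Import Order.TTheory GRing.Theory Num.Theory.
Local Open Scope ring_scope.

(* At x = -1 the sum defining F_{2n+2} is, up to the factor
   -(2n+1)! n! / (3n+1)!, the convolution
   sum_j (-1)^j C(n+j, j) C(2n-j, n-j), i.e. the coefficient of x^n in
   (1 + x)^-(n+1) (1 - x)^-(n+1) = (1 - x^2)^-(n+1).  It vanishes for n odd
   and equals C(3m, m) for n = 2m.  On the other side the ratios
   A_{n+1} / A_n and AV_{2m+3} / AV_{2m+1} are explicit factorial quotients,
   so induction on m identifies AV_{2m+1}^2 / A_{2m+1} with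
   (4m+1)! (3m)! / (m! (6m+1)!), which is -F_{4m+2}(-1). *)

Section Convolution.
Context {R : comNzRingType}.
Implicit Types (f g : nat -> R) (n j N : nat).

Definition conv f g N : R := \sum_(i < N.+1) f i * g (N - i)%N.

Definition shift f j : R := if j is j'.+1 then f j' else 0.

Lemma conv_shiftl f g N : conv (shift f) g N.+1 = conv f g N.
Proof. by rewrite /conv big_ord_recl mul0r add0r. Qed.

Lemma conv_shiftr f g N : conv f (shift g) N.+1 = conv f g N.
Proof.
rewrite /conv big_ord_recr /= subnn mulr0 addr0.
by apply: eq_bigr => i _; rewrite subSn ?leq_ord.
Qed.

Lemma eq_conv {f1 f2 g1 g2} : f1 =1 f2 -> g1 =1 g2 -> conv f1 g1 =1 conv f2 g2.
Proof. by move=> ef eg N; apply: eq_bigr => i _; rewrite ef eg. Qed.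

Lemma convDl f1 f2 g N :
  conv (fun j => f1 j + f2 j) g N = conv f1 g N + conv f2 g N.
Proof. by rewrite /conv -big_split; apply: eq_bigr => i _; rewrite mulrDl. Qed.

Lemma convBr f g1 g2 N :
  conv f (fun j => g1 j - g2 j) N = conv f g1 N - conv f g2 N.
Proof. by rewrite /conv -sumrB; apply: eq_bigr => i _; rewrite mulrBr. Qed.

(* [negbin n] and [altbin n] are the coefficients of (1 - x)^-(n+1) and
   (1 + x)^-(n+1), so [altconv n] lists those of (1 - x^2)^-(n+1). *)
Definition negbin n j : R := 'C(n + j, j)%:R.
Definition altbin n j : R := (-1) ^+ j * negbin n j.
Definition altconv n : nat -> R := conv (altbin n) (negbin n).

Lemma negbin0n j : negbin 0 j = 1.
Proof. by rewrite /negbin add0n binn. Qed.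

Lemma negbinn0 n : negbin n 0 = 1.
Proof. by rewrite /negbin bin0. Qed.

Lemma negbinSS n j : negbin n.+1 j.+1 = negbin n j.+1 + negbin n.+1 j.
Proof. by rewrite /negbin addnS binS addSnnS natrD. Qed.

Lemma negbin_shift n j : negbin n j = negbin n.+1 j - shift (negbin n.+1) j.
Proof.
by case: j => [|j] /=; rewrite ?negbinn0 ?subr0 // negbinSS addrK.
Qed.

Lemma altbin_shift n j : altbin n j = altbin n.+1 j + shift (altbin n.+1) j.
Proof.
case: j => [|j] /=; first by rewrite /altbin !negbinn0 addr0.
rewrite /altbin negbinSS exprS; ring.
Qed.

(* Multiply the two factors by 1 + x and 1 - x, hence the series by 1 - x^2. *)
Lemma altconvSS n N : altconv n.+1 N.+2 = altconv n N.+2 + altconv n.+1 N.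
Proof.
rewrite /altconv (eq_conv (altbin_shift n) (negbin_shift n)) convBr !convDl.
rewrite conv_shiftl !conv_shiftr conv_shiftl; ring.
Qed.

Lemma altconv0 n : altconv n 0 = 1.
Proof. by rewrite /altconv /conv big_ord1 /altbin !negbinn0 !mulr1. Qed.

Lemma altconv1 n : altconv n 1 = 0.
Proof.
rewrite /altconv /conv big_ord_recr big_ord1 /altbin /= !negbinn0 subn0.
by rewrite expr0 expr1 !mul1r !mulr1 mulN1r addrN.
Qed.

Lemma altconv0SS N : altconv 0 N.+2 = altconv 0 N.
Proof.
rewrite /altconv /conv !big_ord_recr /= subnn subSnn /altbin !negbin0n.
rewrite -addrA !mulr1 (exprS _ N.+1) mulN1r addrN addr0.
by congr (_ + _); apply: eq_bigr => i _; rewrite !negbin0n.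
Qed.

Lemma altconvE n N : altconv n N = if odd N then 0 else negbin n N./2.
Proof.
elim: n N => [|n IHn] N; elim/ltn_ind: N => -[|[|N]] IH;
  rewrite ?altconv0 ?negbinn0 ?altconv1 //.
  by rewrite altconv0SS IH // !negbin0n /= negbK.
rewrite altconvSS IHn IH //= negbK.
by case: (odd N); rewrite ?addr0 // negbinSS.
Qed.

End Convolution.

Lemma natr_fact_neq0 k : ((k`!)%:R : rat) != 0.
Proof. by rewrite pnatr_eq0 -lt0n fact_gt0. Qed.

Lemma bin_fact_add a b : ((a + b)`! = 'C(a + b, b) * (b`! * a`!))%N.
Proof. by rewrite -{1}(bin_fact (leq_addl a b)) addnK. Qed.

Lemma Fper_altconv n : Fper n.+1 (-1) =
  - (((2 * n + 1)`! * n`!)%:R / ((3 * n + 1)`!)%:R) * altconv n n.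
Proof.
rewrite /Fper big_add1 /= big_mkord /altconv /conv mulr_sumr.
apply: eq_bigr => [[j /= le_jn]] _.
have -> : (n.+1 + j.+1 - 2 = n + j)%N by lia.
have -> : (2 * n.+1 - 1 = 2 * n + 1)%N by lia.
have -> : (2 * n.+1 - j.+1 - 1 = n + (n - j))%N by lia.
have -> : (3 * n.+1 - 2 = 3 * n + 1)%N by lia.
rewrite !subSS subn0 (bin_fact_add n (n - j)) /altbin /negbin !natrM exprS.
by field; rewrite !natr_fact_neq0.
Qed.

Lemma prod_fact_shift n : (\prod_(j < n.+1) (n.+1 + j)`! * n`! =
  (\prod_(j < n) (n + j)`!) * (2 * n)`! * (2 * n + 1)`!)%N.
Proof.
have shifted : (n`! * \prod_(j < n) (n.+1 + j)`! = \prod_(j < n) (n + j)`! * (2 * n)`!)%N.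
  transitivity (\prod_(j < n.+1) (n + j)`!)%N; last by rewrite big_ord_recr /= addnn mul2n.
  by rewrite big_ord_recl addn0; under [in RHS]eq_bigr do rewrite /bump addnS -addSn.
rewrite big_ord_recr /= -shifted (addSn n n) addnn -mul2n addn1; ring.
Qed.

Definition ASM_ratio n : rat :=
  ((3 * n + 1)`! * n`!)%:R / ((2 * n)`! * (2 * n + 1)`!)%:R.

Lemma ASM_ratio_neq0 n : ASM_ratio n != 0.
Proof. by rewrite /ASM_ratio !natrM mulf_neq0 ?invr_eq0 ?mulf_neq0 ?natr_fact_neq0. Qed.

Lemma ASMS n : ASM n.+1 = ASM n * ASM_ratio n.
Proof.
rewrite /ASM /ASM_ratio !big_split /= !prodfV -!natr_prod [in LHS]big_ord_recr /=.
set D := (\prod_(i < n) (n + i)`!)%N.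
have hD : (D%:R : rat) != 0 by rewrite pnatr_eq0 -lt0n prodn_gt0 // => i; exact: fact_gt0.
have -> : (\prod_(i < n.+1) (n.+1 + i)`!)%:R = (D * (2 * n)`! * (2 * n + 1)`!)%:R / (n`!)%:R :> rat.
  by rewrite -prod_fact_shift natrM mulfK ?natr_fact_neq0.
by rewrite !natrM; field; rewrite hD !natr_fact_neq0.
Qed.

Lemma ASM_neq0 n : ASM n != 0.
Proof. by apply/prodf_neq0 => i _; rewrite mulf_neq0 ?invr_eq0 ?natr_fact_neq0. Qed.

Definition AVodd_ratio m : rat := (3 * m + 2)%:R
  * (((6 * m + 3)`! * (2 * m + 1)`!)%:R / ((4 * m + 3)`! * (4 * m + 2)`!)%:R).

Lemma AVoddS m : AVodd m.+1 = AVodd m * AVodd_ratio m.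
Proof. by rewrite /AVodd big_ord_recr. Qed.

Definition AVsq_ASM_closed m : rat :=
  ((4 * m + 1)`! * (3 * m)`!)%:R / (m`! * (6 * m + 1)`!)%:R.

Lemma natr_fact_addS k d : (((k + d.+1)`!)%:R : rat) = (k + d.+1)%:R * ((k + d)`!)%:R.
Proof. by rewrite addnS factS natrM. Qed.

Lemma AVsq_ASM_closedS m :
  AVsq_ASM_closed m.+1 * (ASM_ratio (2 * m + 1) * ASM_ratio (2 * m + 2)) =
  AVsq_ASM_closed m * AVodd_ratio m ^+ 2.
Proof.
rewrite /AVsq_ASM_closed /ASM_ratio /AVodd_ratio.
have -> : (4 * m.+1 + 1 = 4 * m + 5)%N by lia.
have -> : (3 * m.+1 = 3 * m + 3)%N by lia.
have -> : (6 * m.+1 + 1 = 6 * m + 7)%N by lia.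
have -> : (3 * (2 * m + 1) + 1 = 6 * m + 4)%N by lia.
have -> : (3 * (2 * m + 2) + 1 = 6 * m + 7)%N by lia.
have -> : (2 * (2 * m + 1) + 1 = 4 * m + 3)%N by lia.
have -> : (2 * (2 * m + 2) + 1 = 4 * m + 5)%N by lia.
have -> : (2 * (2 * m + 1) = 4 * m + 2)%N by lia.
have -> : (2 * (2 * m + 2) = 4 * m + 4)%N by lia.
rewrite -[m.+1]addn1 !natrM !natr_fact_addS ?addn0 !natrD ?natrM.
have m_ge0 : (0 : rat) <= m%:R by rewrite ler0n.
field; rewrite !natr_fact_neq0 /=.
by repeat (apply/andP; split); apply: lt0r_neq0; lra.
Qed.

Lemma AVodd_sq_div_ASM m : AVodd m ^+ 2 / ASM (2 * m + 1) = AVsq_ASM_closed m.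
Proof.
elim: m => [|m IH]; first by rewrite /AVodd /ASM big_ord0 big_ord1.
have -> : (2 * m.+1 + 1 = (2 * m + 1).+2)%N by lia.
rewrite AVoddS !ASMS.
have -> : ((2 * m + 1).+1 = 2 * m + 2)%N by lia.
have r_neq0 := mulf_neq0 (ASM_ratio_neq0 (2 * m + 1)) (ASM_ratio_neq0 (2 * m + 2)).
rewrite -[AVsq_ASM_closed _](mulfK r_neq0) AVsq_ASM_closedS -IH.
by field; rewrite ASM_neq0 !ASM_ratio_neq0.
Qed.

Lemma Fper_odd m : Fper (2 * m).+1 (-1) = - AVsq_ASM_closed m.
Proof.
have even_2m : odd (2 * m) = false by rewrite mul2n odd_double.
have half_2m : (2 * m)./2 = m by rewrite mul2n doubleK.
rewrite Fper_altconv altconvE even_2m half_2m mulNr; congr (- _).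
rewrite /negbin /AVsq_ASM_closed.
have -> : (2 * (2 * m) + 1 = 4 * m + 1)%N by lia.
have -> : (3 * (2 * m) + 1 = 6 * m + 1)%N by lia.
have -> : (3 * m = 2 * m + m)%N by lia.
rewrite (bin_fact_add (2 * m) m) !natrM.
by field; rewrite !natr_fact_neq0.
Qed.

Theorem mainTheorem4 (n : nat) (hn : (1 <= n)%N) :
  (~~ odd n -> Fper n (-1) = 0) /\
  (odd n -> Fper n (-1) = - (AV n ^+ 2) / ASM n).
Proof.
case: n hn => [//|n] _ /=.
split=> [/negPn odd_n | even_n].
  by rewrite Fper_altconv altconvE odd_n mulr0.
have [m ->] : exists m, n = (2 * m)%N.
  by exists n./2; rewrite -[LHS]odd_double_half (negbTE even_n) -mul2n.
rewrite Fper_odd /AV mul2n /= uphalf_double -mul2n -[(2 * m).+1]addn1.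
by rewrite mulNr AVodd_sq_div_ASM.
Qed.
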